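(* Let $\mathcal S$ be a set of density matrices on finite-dimensional Hilbert spaces that is closed under tensor products and under permutations of tensor factors, and let $f$ be a real-valued function on pairs $(\rho,\sigma)$ with $\sigma\in\mathcal S$ and $\rho$ a density matrix on $\mathcal H_\sigma$, which is locally monotonic with respect to $\mathcal S$. Then $f'(\rho,\sigma):=f(\rho,\sigma)-f(\sigma,\sigma)$ is additive under tensor products: for all $\sigma_1,\sigma_2\in\mathcal S$ and density matrices $\rho_i$ on $\mathcal H_{\sigma_i}$, $$f'(\rho_1\otimes\rho_2,\sigma_1\otimes\sigma_2)=f'(\rho_1,\sigma_1)+f'(\rho_2,\sigma_2).$$
   Context: For $\sigma\in\mathcal S$, $\mathcal H_\sigma$ is the Hilbert space on which $\sigma$ acts and $\mathcal C_\sigma$ is the set of quantum channels $C$ on $\mathcal H_\sigma$ with $C[\sigma]=\sigma$. Closure under permutations means $\sigma\otimes\sigma'\in\mathcal S\Rightarrow\sigma'\otimes\sigma\in\mathcal S$. $f$ is locally monotonic with respect to $\mathcal S$ if for all $\sigma_1,\sigma_2\in\mathcal S$, all $C\in\mathcal C_{\sigma_1\otimes\sigma_2}$ and all density matrices $\rho_i$ on $\mathcal H_{\sigma_i}$: $f(\rho_1,\sigma_1)+f(\rho_2,\sigma_2)\ge f(\rho'_1,\sigma_1)+f(\rho'_2,\sigma_2)$, where $\rho'_1=\mathrm{Tr}_2[C(\rho_1\otimes\rho_2)]$, $\rho'_2=\mathrm{Tr}_1[C(\rho_1\otimes\rho_2)]$. *)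

From HB Require Import structures.
From mathcomp Require Import all_boot all_order all_algebra.
From mathcomp Require Import reals complex mxtens.
Set Implicit Arguments. Unset Strict Implicit. Unset Printing Implicit Defensive.
Import Order.TTheory GRing.Theory Num.Theory.
Local Open Scope ring_scope.

Section Quantum.
Variable C : numClosedFieldType.

Definition adjmx m n (A : 'M[C]_(m, n)) : 'M[C]_(n, m) := (map_mx Num.conj A)^T.

Definition hermitian n (A : 'M[C]_n) : Prop := adjmx A = A.
Definition psd n (A : 'M[C]_n) : Prop :=
  hermitian A /\ forall v : 'cV[C]_n, 0 <= (adjmx v *m A *m v) 0 0.
Definition density n (A : 'M[C]_n) : Prop := psd A /\ \tr A = 1.

(* block (a,b) of a matrix on C^k (x) C^n, using the Kronecker index convention of mxtens *)
Definition mxblock_of k n (X : 'M[C]_(k * n)) (a b : 'I_k) : 'M[C]_n :=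
  \matrix_(p, q) X (mxtens_index (a, p)) (mxtens_index (b, q)).

(* (id_k (x) Phi) applied to X *)
Definition ampliate k n (Phi : 'M[C]_n -> 'M[C]_n) (X : 'M[C]_(k * n)) : 'M[C]_(k * n) :=
  \matrix_(i, j) Phi (mxblock_of X (mxtens_unindex i).1 (mxtens_unindex j).1)
                     (mxtens_unindex i).2 (mxtens_unindex j).2.

Definition linear_map n (Phi : 'M[C]_n -> 'M[C]_n) : Prop :=
  forall (a : C) (A B : 'M[C]_n), Phi (a *: A + B) = a *: Phi A + Phi B.

Definition completely_positive n (Phi : 'M[C]_n -> 'M[C]_n) : Prop :=
  forall k (X : 'M[C]_(k * n)), psd X -> psd (ampliate Phi X).

Definition trace_preserving n (Phi : 'M[C]_n -> 'M[C]_n) : Prop :=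
  forall A : 'M[C]_n, \tr (Phi A) = \tr A.

Definition channel n (Phi : 'M[C]_n -> 'M[C]_n) : Prop :=
  [/\ linear_map Phi, completely_positive Phi & trace_preserving Phi].

Definition ptrace2 m n (X : 'M[C]_(m * n)) : 'M[C]_m :=
  \matrix_(a, b) \sum_(j < n) X (mxtens_index (a, j)) (mxtens_index (b, j)).
Definition ptrace1 m n (X : 'M[C]_(m * n)) : 'M[C]_n :=
  \matrix_(a, b) \sum_(i < m) X (mxtens_index (i, a)) (mxtens_index (i, b)).

End Quantum.

Definition states (C : numClosedFieldType) := forall n : nat, 'M[C]_n -> Prop.

Definition states_are_density (C : numClosedFieldType) (S : states C) : Prop :=
  forall n (s : 'M[C]_n), S n s -> density s.
Definition closed_tensor (C : numClosedFieldType) (S : states C) : Prop :=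
  forall m n (s1 : 'M[C]_m) (s2 : 'M[C]_n), S m s1 -> S n s2 -> S (m * n)%N (s1 *t s2).
Definition closed_perm (C : numClosedFieldType) (S : states C) : Prop :=
  forall m n (s1 : 'M[C]_m) (s2 : 'M[C]_n), S (m * n)%N (s1 *t s2) -> S (n * m)%N (s2 *t s1).

Definition locally_monotonic (R : realType) (S : states R[i])
    (f : forall n, 'M[R[i]]_n -> 'M[R[i]]_n -> R) : Prop :=
  forall m n (s1 : 'M[R[i]]_m) (s2 : 'M[R[i]]_n)
         (Phi : 'M[R[i]]_(m * n) -> 'M[R[i]]_(m * n))
         (r1 : 'M[R[i]]_m) (r2 : 'M[R[i]]_n),
    S m s1 -> S n s2 -> channel Phi -> Phi (s1 *t s2) = s1 *t s2 ->
    density r1 -> density r2 ->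
    f m (ptrace2 (Phi (r1 *t r2))) s1 + f n (ptrace1 (Phi (r1 *t r2))) s2
      <= f m r1 s1 + f n r2 s2.

Definition fprime (R : realType) (f : forall n, 'M[R[i]]_n -> 'M[R[i]]_n -> R)
    n (r s : 'M[R[i]]_n) : R := f n r s - f n s s.

From Pilot Require Import Defs.
From HB Require Import structures.
From mathcomp Require Import all_boot all_order all_algebra.
From mathcomp Require Import reals complex mxtens lra.
From mathcomp Require spectral.
Import Order.TTheory GRing.Theory Num.Theory.
Local Open Scope ring_scope.
Set Implicit Arguments. Unset Strict Implicit. Unset Printing Implicit Defensive.

(* Write s = s1 (x) s2.  Relabelling tensor factors is a channel, so it can be
   used in local monotonicity.  Exchanging r1 with a copy of s1 inside
   r1 (x) (s1 (x) r2), a channel fixing s1 (x) (s1 (x) s2), gives an inequality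
   in one direction; the inverse exchange gives the other, hence
   f'(r1, s1) = f(r1 (x) r2, s) - f(s1 (x) r2, s).  Exchanging r2 with a copy
   of s2 in the same way gives f'(r2, s2) = f(s1 (x) r2, s) - f(s, s), and the
   two identities telescope. *)

Section PositiveSemidefinite.
Variable C : numClosedFieldType.

Lemma adjmxM m n p (A : 'M[C]_(m, n)) (B : 'M[C]_(n, p)) :
  adjmx (A *m B) = adjmx B *m adjmx A.
Proof. by rewrite /adjmx map_mxM trmx_mul. Qed.

Lemma adjmxK m n (A : 'M[C]_(m, n)) : adjmx (adjmx A) = A.
Proof. by apply/matrixP => i j; rewrite !mxE conjCK. Qed.

Lemma adjmx_tens m n p q (A : 'M[C]_(m, n)) (B : 'M[C]_(p, q)) :
  adjmx (A *t B) = adjmx A *t adjmx B.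
Proof. by apply/matrixP => i j; rewrite !mxE rmorphM. Qed.

Lemma adjmxE m n (A : 'M[C]_(m, n)) : adjmx A = map_mx Num.conj A^T.
Proof. by rewrite /adjmx map_trmx. Qed.

Lemma adjmx_delta n (i : 'I_n) : adjmx (delta_mx i 0 : 'cV[C]_n) = delta_mx 0 i.
Proof.
by apply/matrixP => a b; rewrite !mxE andbC; case: (_ && _); rewrite ?rmorph1 ?rmorph0.
Qed.

Lemma psd_adjmx_mul m n (M : 'M[C]_(m, n)) : psd (adjmx M *m M).
Proof.
split; first by rewrite /Defs.hermitian adjmxM adjmxK.
move=> v; rewrite mulmxA -adjmxM -mulmxA !mxE.
by apply: sumr_ge0 => k _; rewrite !mxE mulrC mul_conjC_ge0.
Qed.

Lemma psd_factor n (A : 'M[C]_n) : psd A -> exists M : 'M[C]_n, A = adjmx M *m M.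
Proof.
move=> [hA A_ge0].
have /spectral.orthomx_spectralP : A \is spectral.normalmx.
  by apply/spectral.normalmxP; rewrite -adjmxE hA.
set P := spectral.spectralmx A; set d := spectral.spectral_diag A => eA.
have P_unitary : P \is spectral.unitarymx := spectral.spectral_unitarymx A.
rewrite (spectral.invmx_unitary P_unitary) -adjmxE in eA.
have PK k (X : 'M[C]_(k, n)) : X *m P *m adjmx P = X.
  by rewrite -mulmxA adjmxE (spectral.unitarymxP P_unitary) mulmx1.
have d_ge0 i : 0 <= d 0 i.
  have := A_ge0 (adjmx P *m delta_mx i 0).
  by rewrite adjmxM adjmxK eA !mulmxA !PK adjmx_delta -rowE -colE !mxE eqxx mulr1n.
pose D := diag_mx (map_mx sqrtC d).
have D_self_adjoint : adjmx D = D.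
  apply/matrixP => a b; rewrite !mxE; case: eqVneq => [->|_].
    by rewrite !mulr1n geC0_conj // sqrtC_ge0.
  by rewrite !mulr0n rmorph0.
exists (D *m P).
rewrite adjmxM D_self_adjoint eA !mulmxA -[_ *m D *m D]mulmxA mulmx_diag.
congr (_ *m diag_mx _ *m _); apply/rowP => j.
by rewrite !mxE -expr2 sqrtCK.
Qed.

Lemma psd_tens m n (A : 'M[C]_m) (B : 'M[C]_n) : psd A -> psd B -> psd (A *t B).
Proof.
move=> /psd_factor [M ->] /psd_factor [N ->].
by rewrite -tensmx_mul -adjmx_tens; apply: psd_adjmx_mul.
Qed.

Lemma mxtrace_tens m n (A : 'M[C]_m) (B : 'M[C]_n) : \tr (A *t B) = \tr A * \tr B.
Proof. by rewrite /mxtrace mulr_sum; apply: eq_bigr => i _; rewrite mxE. Qed.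

Lemma density_tens m n (A : 'M[C]_m) (B : 'M[C]_n) :
  density A -> density B -> density (A *t B).
Proof.
move=> [A_psd trA] [B_psd trB]; split; first exact: psd_tens.
by rewrite mxtrace_tens trA trB mulr1.
Qed.

Lemma ptrace2_tens m n (A : 'M[C]_m) (B : 'M[C]_n) : ptrace2 (A *t B) = \tr B *: A.
Proof.
apply/matrixP => a b; rewrite !mxE /mxtrace mulr_suml.
by apply: eq_bigr => j _; rewrite tensmxE mulrC.
Qed.

Lemma ptrace1_tens m n (A : 'M[C]_m) (B : 'M[C]_n) : ptrace1 (A *t B) = \tr A *: B.
Proof.
apply/matrixP => a b; rewrite !mxE /mxtrace mulr_suml.
by apply: eq_bigr => j _; rewrite tensmxE.
Qed.

End PositiveSemidefinite.

Section Relabelling.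
Variable C : numClosedFieldType.

Definition reindex_mx N (pi : 'I_N -> 'I_N) (X : 'M[C]_N) : 'M[C]_N :=
  \matrix_(i, j) X (pi i) (pi j).

Lemma reindex_mxK N (pi : 'I_N -> 'I_N) :
  involutive pi -> involutive (reindex_mx pi).
Proof. by move=> piK X; apply/matrixP => i j; rewrite !mxE !piK. Qed.

Lemma quadformE n (v : 'cV[C]_n) (X : 'M[C]_n) :
  (adjmx v *m X *m v) 0 0 = \sum_j \sum_i (v i 0)^* * X i j * v j 0.
Proof.
rewrite !mxE; apply: eq_bigr => j _; rewrite !mxE mulr_suml.
by apply: eq_bigr => i _; rewrite !mxE.
Qed.

Lemma psd_reindex_mx N (pi : 'I_N -> 'I_N) (X : 'M[C]_N) :
  injective pi -> psd X -> psd (reindex_mx pi X).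
Proof.
move=> pi_inj [hX X_ge0]; split.
  by apply/matrixP => i j; rewrite -[in RHS]hX !mxE.
move=> v; pose w : 'cV[C]_N := \col_k v (invF pi_inj k) 0.
rewrite quadformE.
have -> : \sum_j \sum_i (v i 0)^* * reindex_mx pi X i j * v j 0
        = \sum_j \sum_i (w i 0)^* * X i j * w j 0.
  rewrite [RHS](reindex_inj pi_inj); apply: eq_bigr => j _.
  rewrite [RHS](reindex_inj pi_inj); apply: eq_bigr => i _.
  by rewrite !mxE !invF_f.
by rewrite -quadformE.
Qed.

Lemma reindex_mx_channel N (pi : 'I_N -> 'I_N) : injective pi -> channel (reindex_mx pi).
Proof.
move=> pi_inj; split.
- by move=> a A B; apply/matrixP => i j; rewrite !mxE.
- move=> k X X_psd.
  pose pik (i : 'I_(k * N)) :=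
    mxtens_index ((mxtens_unindex i).1, pi (mxtens_unindex i).2).
  have pik_inj : injective pik.
    move=> i j /(congr1 (@mxtens_unindex k N)); rewrite !mxtens_indexK => e.
    apply: (can_inj (@mxtens_unindexK k N)); apply: injective_projections.
      exact: (congr1 fst e).
    exact/pi_inj/(congr1 snd e).
  have -> : ampliate (reindex_mx pi) X = reindex_mx pik X.
    by apply/matrixP => i j; rewrite !mxE.
  exact: psd_reindex_mx.
- move=> A; rewrite /mxtrace [RHS](reindex_inj pi_inj).
  by apply: eq_bigr => i _; rewrite mxE.
Qed.

Definition swap12 m n (i : 'I_(m * (m * n))) : 'I_(m * (m * n)) :=
  let: (a, k) := mxtens_unindex i in let: (b, c) := mxtens_unindex k in
  mxtens_index (b, mxtens_index (a, c)).

Definition swap13 m n (i : 'I_(n * (m * n))) : 'I_(n * (m * n)) :=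
  let: (a, k) := mxtens_unindex i in let: (b, c) := mxtens_unindex k in
  mxtens_index (c, mxtens_index (b, a)).

Lemma swap12E m n a b c :
  @swap12 m n (mxtens_index (a, mxtens_index (b, c)))
  = mxtens_index (b, mxtens_index (a, c)).
Proof. by rewrite /swap12 !mxtens_indexK. Qed.

Lemma swap13E m n a b c :
  @swap13 m n (mxtens_index (a, mxtens_index (b, c)))
  = mxtens_index (c, mxtens_index (b, a)).
Proof. by rewrite /swap13 !mxtens_indexK. Qed.

Lemma swap12K m n : involutive (@swap12 m n).
Proof.
move=> i; case: (mxtens_indexP i) => a k; case: (mxtens_indexP k) => b c.
by rewrite !swap12E.
Qed.

Lemma swap13K m n : involutive (@swap13 m n).
Proof.
move=> i; case: (mxtens_indexP i) => a k; case: (mxtens_indexP k) => b c.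
by rewrite !swap13E.
Qed.

Lemma reindex_swap12_tens m n (x y : 'M[C]_m) (z : 'M[C]_n) :
  reindex_mx (@swap12 m n) (x *t (y *t z)) = y *t (x *t z).
Proof.
apply/matrixP => i j; case: (mxtens_indexP i) => a k; case: (mxtens_indexP k) => b c.
case: (mxtens_indexP j) => a' k'; case: (mxtens_indexP k') => b' c'.
by rewrite mxE !swap12E !tensmxE mulrCA.
Qed.

Lemma reindex_swap13_tens m n (x : 'M[C]_n) (y : 'M[C]_m) (z : 'M[C]_n) :
  reindex_mx (@swap13 m n) (x *t (y *t z)) = z *t (y *t x).
Proof.
apply/matrixP => i j; case: (mxtens_indexP i) => a k; case: (mxtens_indexP k) => b c.
case: (mxtens_indexP j) => a' k'; case: (mxtens_indexP k') => b' c'.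
by rewrite mxE !swap13E !tensmxE mulrC [y b b' * _]mulrC mulrA.
Qed.

End Relabelling.

Unset Implicit Arguments.

Section LocalMonotonicity.
Context {R : realType} {S : states R[i]} {f : forall n, 'M[R[i]]_n -> 'M[R[i]]_n -> R}.
Hypotheses (S_density : states_are_density S) (f_mono : locally_monotonic S f).

Lemma locally_monotonic_exchange {m N : nat} {sw : 'I_(m * N) -> 'I_(m * N)}
    {s r : 'M[R[i]]_m} {t X Y : 'M[R[i]]_N} :
  involutive sw -> S m s -> S N t -> reindex_mx sw (s *t t) = s *t t ->
  density r -> density X -> density Y -> reindex_mx sw (r *t X) = s *t Y ->
  fprime f r s = f N Y t - f N X t.
Proof.
move=> swK Ss St sw_fix dr dX dY sw_rX.
have sw_sY : reindex_mx sw (s *t Y) = r *t X by rewrite -sw_rX reindex_mxK.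
have sw_channel := reindex_mx_channel R[i] (can_inj swK).
have ds : density s := S_density _ _ Ss.
have tr1 n (A : 'M[R[i]]_n) : density A -> \tr A = 1 by case.
have le_rX := f_mono _ _ _ _ (reindex_mx sw) r X Ss St sw_channel sw_fix dr dX.
rewrite sw_rX ptrace2_tens ptrace1_tens !tr1 // !scale1r in le_rX.
have le_sY := f_mono _ _ _ _ (reindex_mx sw) s Y Ss St sw_channel sw_fix ds dY.
rewrite sw_sY ptrace2_tens ptrace1_tens !tr1 // !scale1r in le_sY.
rewrite /fprime; lra.
Qed.

End LocalMonotonicity.

Theorem lemma36 (R : realType) (S : states R[i])
    (f : forall n, 'M[R[i]]_n -> 'M[R[i]]_n -> R) :
  states_are_density S -> closed_tensor S -> closed_perm S ->
  locally_monotonic S f ->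
  forall m n (s1 : 'M[R[i]]_m) (s2 : 'M[R[i]]_n) (r1 : 'M[R[i]]_m) (r2 : 'M[R[i]]_n),
    S m s1 -> S n s2 -> density r1 -> density r2 ->
    fprime f (r1 *t r2) (s1 *t s2) = fprime f r1 s1 + fprime f r2 s2.
Proof.
move=> S_density S_tens _ f_mono m n s1 s2 r1 r2 S1 S2 d1 d2.
have S12 := S_tens _ _ _ _ S1 S2.
have [ds1 ds12] := (S_density _ _ S1, S_density _ _ S12).
rewrite (locally_monotonic_exchange S_density f_mono (@swap12K m n) S1 S12
  (reindex_swap12_tens s1 s1 s2) d1 (density_tens ds1 d2) (density_tens d1 d2)
  (reindex_swap12_tens r1 s1 r2)).
rewrite (locally_monotonic_exchange S_density f_mono (@swap13K m n) S2 S12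
  (reindex_swap13_tens s2 s1 s2) d2 ds12 (density_tens ds1 d2)
  (reindex_swap13_tens r2 s1 s2)).
by rewrite /fprime addrA subrK.
Qed.
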